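(* Let $r,t\ge1$, $\varepsilon\ge 0$, let $\boldsymbol\Sigma\in\mathbb R^{r\times t}$ be a rectangular diagonal matrix with nonnegative diagonal entries and $\boldsymbol\Lambda\in\mathbb R^{t\times t}$ a diagonal matrix with nonnegative diagonal entries. Then the minimization problem $$\min_{\boldsymbol\Delta\in\mathbb C^{r\times t},\ \|\boldsymbol\Delta\|_2\le\varepsilon}\ \det\!\left[\mathbf I_r+(\boldsymbol\Sigma+\boldsymbol\Delta)\boldsymbol\Lambda(\boldsymbol\Sigma+\boldsymbol\Delta)^H\right]$$ has a minimizer $\boldsymbol\Delta$ that is a (rectangular) diagonal matrix.
   Context: $\|\cdot\|_2$ denotes the spectral norm (largest singular value). A rectangular $r\times t$ matrix is diagonal if all entries $(i,j)$ with $i\ne j$ vanish. *)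

From HB Require Import structures.
From mathcomp Require Import all_boot all_order all_algebra.
Set Implicit Arguments. Unset Strict Implicit. Unset Printing Implicit Defensive.
Import Order.TTheory GRing.Theory Num.Theory.
Local Open Scope ring_scope.

Definition conjT (C : numClosedFieldType) (m n : nat) (A : 'M[C]_(m, n))
  : 'M[C]_(n, m) := (map_mx Num.conj A)^T.

(* ||A||_2 <= e, i.e. the spectral (operator 2-) norm of A is at most e:
   for every vector x, ||A x||^2 <= e^2 ||x||^2  (together with 0 <= e). *)
Definition spec_norm_le (C : numClosedFieldType) (m n : nat)
  (A : 'M[C]_(m, n)) (e : C) : Prop :=
  0 <= e /\
  forall x : 'cV[C]_n,
    (conjT (A *m x) *m (A *m x)) ord0 ord0 <= e ^+ 2 * (conjT x *m x) ord0 ord0.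

From HB Require Import structures.
From mathcomp Require Import all_boot all_order all_algebra.
From mathcomp Require Import ring.
Import Order.TTheory GRing.Theory Num.Theory.
Local Open Scope ring_scope.
Set Implicit Arguments. Unset Strict Implicit.

(* Factor Lam = Q Q^H with Q = diag (sqrt lam_j); by Sylvester's determinant
   identity the objective is det (I + X^H X) with X = (Sig + D) Q.
   Soft-thresholding the diagonal of Sig by eps, i.e. c_j = (sig_j - eps)_+,
   is an admissible diagonal D for which this matrix is diagonal with
   determinant prod_j (1 + lam_j c_j^2).  For any admissible D, the reverse
   triangle inequality gives |(Sig + D) z| >= c_k |z| whenever z vanishes off
   {j | c_j >= c_k}.  Such a graded lower bound already forces
   det (I + X^H X) >= prod_j (1 + lam_j c_j^2): for the index k of least c_k,
   the k-th adjugate column y satisfies y^H H y = det (minor_k H) det H and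
   y^H H y >= (1 + lam_k c_k^2) det (minor_k H)^2, and one inducts on the minor. *)

Section RectangularDiagonal.
Variable R : nmodType.

Lemma sum_ord_val m n (i : 'I_m) (F : 'I_n -> R) :
  \sum_(j : 'I_n | j == i :> nat) F j = oapp F 0 (insub (val i)).
Proof.
case: insubP => [j _ ji|/negP iNlt] /=; first by rewrite (big_pred1 j) // => k; rewrite /= -ji.
by rewrite big_pred0 // => k; apply/eqP => ki; apply: iNlt; move: (ltn_ord k); rewrite ki.
Qed.

(* The j-th diagonal entry of a rectangular matrix, 0 when j >= r. *)
Definition rdiag r t (M : 'M[R]_(r, t)) (j : 'I_t) : R :=
  \sum_(i : 'I_r | i == j :> nat) M i j.

Lemma rdiagE r t (M : 'M[R]_(r, t)) j :
  rdiag M j = oapp (fun i => M i j) 0 (insub (val j)).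
Proof. exact: sum_ord_val. Qed.

End RectangularDiagonal.

Lemma map_mx_diag (R S : nmodType) r t (f : R -> S) (M : 'M[R]_(r, t)) :
  f 0 = 0 -> is_diag_mx M -> is_diag_mx (map_mx f M).
Proof. by move=> f0 /is_diag_mxP M0; apply/is_diag_mxP => i j ij; rewrite mxE M0. Qed.

Lemma rdiag_map (R S : nmodType) r t (f : R -> S) (M : 'M[R]_(r, t)) j :
  f 0 = 0 -> rdiag (map_mx f M) j = f (rdiag M j).
Proof. by move=> f0; rewrite !rdiagE; case: insub => [i|] //=; rewrite mxE. Qed.

Section ConjugateTranspose.
Variable C : numClosedFieldType.

Lemma conjTE m n (A : 'M[C]_(m, n)) i j : conjT A i j = (A j i)^*.
Proof. by rewrite !mxE. Qed.

Lemma conjT_mul m n p (A : 'M[C]_(m, n)) (B : 'M[C]_(n, p)) :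
  conjT (A *m B) = conjT B *m conjT A.
Proof. by rewrite /conjT map_mxM trmx_mul. Qed.

Lemma conjTD m n (A B : 'M[C]_(m, n)) : conjT (A + B) = conjT A + conjT B.
Proof. by apply/matrixP => i j; rewrite !mxE rmorphD. Qed.

Lemma conjTZ m n (x : C) (A : 'M[C]_(m, n)) : conjT (x *: A) = x^* *: conjT A.
Proof. by apply/matrixP => i j; rewrite !mxE rmorphM. Qed.

Lemma conjT_diag n (d : 'rV[C]_n) : conjT (diag_mx d) = diag_mx (map_mx Num.conj d).
Proof.
apply/matrixP => i j; rewrite !mxE rmorphMn.
by have [->|/negPf ij] := eqVneq i j; rewrite ?eqxx // eq_sym ij.
Qed.

Definition sqnorm n (x : 'cV[C]_n) : C := (conjT x *m x) 0 0.

Lemma sqnormE n (x : 'cV[C]_n) : sqnorm x = \sum_i `|x i 0| ^+ 2.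
Proof. by rewrite /sqnorm mxE; apply: eq_bigr => i _; rewrite !mxE normCK mulrC. Qed.

Lemma sqnorm_ge0 n (x : 'cV[C]_n) : 0 <= sqnorm x.
Proof. by rewrite sqnormE sumr_ge0 // => i _; rewrite exprn_ge0. Qed.

Lemma sqnorm_entry_le n (x : 'cV[C]_n) k : `|x k 0| ^+ 2 <= sqnorm x.
Proof. by rewrite sqnormE (bigD1 k) //= lerDl sumr_ge0 // => i _; rewrite exprn_ge0. Qed.

Lemma sqnorm_le0 n (x : 'cV[C]_n) : sqnorm x <= 0 -> x = 0.
Proof.
move=> x_le0; have : sqnorm x == 0 by rewrite eq_le x_le0 sqnorm_ge0.
rewrite sqnormE psumr_eq0 => [/allP x0|i _]; last by rewrite exprn_ge0.
apply/matrixP => i j; rewrite (ord1 j) mxE.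
by have := x0 i (mem_index_enum _); rewrite /= expf_eq0 normr_eq0 => /eqP.
Qed.

Lemma sqnormZD n (a b : 'cV[C]_n) (x y : C) : x \is Num.real -> y \is Num.real ->
  sqnorm (x *: a + y *: b) = x ^+ 2 * sqnorm a + y ^+ 2 * sqnorm b
                             + x * y * (sqnorm (a + b) - sqnorm a - sqnorm b).
Proof.
move=> xR yR; rewrite /sqnorm !conjTD !conjTZ !conj_Creal // !mulmxDl !mulmxDr.
by rewrite -!scalemxAl -!scalemxAr !mxE; ring.
Qed.

(* [sqnormZD] stands in for Cauchy-Schwarz: expanding
   [0 <= sqnorm (e *: a + p *: b)] bounds the cross term of [a + b]. *)
Lemma sqnorm_addr_ge n (a b : 'cV[C]_n) (p e N : C) :
  0 <= e -> e < p -> 0 <= N -> p ^+ 2 * N <= sqnorm a -> sqnorm b <= e ^+ 2 * N ->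
  (p - e) ^+ 2 * N <= sqnorm (a + b).
Proof.
move=> e_ge0 lt_ep N_ge0 a_ge b_le.
have p_gt0 : 0 < p := le_lt_trans e_ge0 lt_ep.
have pe_ge0 : 0 <= p - e by rewrite subr_ge0 ltW.
have [e0|e_neq0] := eqVneq e 0.
  by move: b_le; rewrite e0 expr0n mul0r => /sqnorm_le0 ->; rewrite addr0 subr0.
have ep_gt0 : 0 < e * p by rewrite mulr_gt0 // lt_def e_neq0.
have comb_ge0 := sqnorm_ge0 (e *: a + p *: b).
rewrite sqnormZD ?(ger0_real e_ge0) ?(ger0_real (ltW p_gt0)) // in comb_ge0.
have a_ge' : e * (p - e) * (p ^+ 2 * N) <= e * (p - e) * sqnorm a.
  by rewrite ler_wpM2l // mulr_ge0.
have b_le' : p * (p - e) * sqnorm b <= p * (p - e) * (e ^+ 2 * N).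
  by rewrite ler_wpM2l // mulr_ge0 // ltW.
rewrite -(ler_pM2r ep_gt0).
have -> : sqnorm (a + b) * (e * p) =
    (e ^+ 2 * sqnorm a + p ^+ 2 * sqnorm b
      + e * p * (sqnorm (a + b) - sqnorm a - sqnorm b))
    + (e * (p - e) * sqnorm a - p * (p - e) * sqnorm b) by ring.
have -> : (p - e) ^+ 2 * N * (e * p) =
    e * (p - e) * (p ^+ 2 * N) - p * (p - e) * (e ^+ 2 * N) by ring.
exact: ler_wpDl comb_ge0 (lerB a_ge' b_le').
Qed.

Lemma diag_conjT_mul r t (M : 'M[C]_(r, t)) :
  is_diag_mx M -> conjT M *m M = diag_mx (\row_j `|rdiag M j| ^+ 2).
Proof.
move=> /is_diag_mxP M0; apply/matrixP => j l; rewrite !mxE.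
have [<-|njl] := eqVneq j l; last first.
  rewrite mulr0n big1 // => i _; rewrite conjTE.
  have [ij|nij] := eqVneq (val i) (val j); last by rewrite [M i j]M0 // rmorph0 mul0r.
  by rewrite [M i l]M0 ?mulr0 // ij.
rewrite mulr1n (bigID (fun i : 'I_r => i == j :> nat)) /= [X in _ + X]big1 => [|i /M0->];
  last by rewrite mulr0.
rewrite addr0 /rdiag !sum_ord_val; case: insub => [i|] /=; last by rewrite normr0 expr0n.
by rewrite conjTE mulrC -normCK.
Qed.

Lemma sqnorm_diag_mul r t (M : 'M[C]_(r, t)) (z : 'cV[C]_t) : is_diag_mx M ->
  sqnorm (M *m z) = \sum_j `|rdiag M j| ^+ 2 * `|z j 0| ^+ 2.
Proof.
move=> Mdiag; rewrite /sqnorm conjT_mul -mulmxA (mulmxA (conjT M)) diag_conjT_mul //.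
rewrite mul_diag_mx mxE; apply: eq_bigr => j _.
by rewrite !mxE mulrCA [_^* * _]mulrC -normCK.
Qed.

Lemma spec_norm_le_diag r t (M : 'M[C]_(r, t)) (e : C) :
  is_diag_mx M -> 0 <= e -> (forall j, `|rdiag M j| <= e) -> spec_norm_le M e.
Proof.
move=> Mdiag e_ge0 Me; split=> // x; rewrite -[_ ord0 ord0]/(sqnorm _).
rewrite -[(conjT x *m x) _ _]/(sqnorm x) sqnorm_diag_mul // sqnormE mulr_sumr.
apply: ler_sum => j _; rewrite ler_wpM2r ?exprn_ge0 //.
by rewrite !expr2 ler_pM.
Qed.

End ConjugateTranspose.

Lemma det_add1_mulmxC (R : comPzRingType) r t (A : 'M[R]_(r, t)) (B : 'M[R]_(t, r)) :
  \det (1%:M + A *m B) = \det (1%:M + B *m A).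
Proof.
have LU : block_mx 1%:M (-A) B 1%:M =
    block_mx 1%:M 0 B 1%:M *m block_mx 1%:M (-A) 0 (1%:M + B *m A).
  rewrite mulmx_block !mul1mx ?mul0mx ?mulmx0 ?mulmx1 ?addr0 ?add0r ?mulmxN.
  by rewrite addrC addrK.
have UL : block_mx 1%:M (-A) B 1%:M =
    block_mx (1%:M + A *m B) (-A) 0 1%:M *m block_mx 1%:M 0 B 1%:M.
  rewrite mulmx_block !mul1mx ?mul0mx ?mulmx0 ?mulmx1 ?addr0 ?add0r ?mulNmx.
  by rewrite addrK.
have := congr1 determinant LU; rewrite UL !det_mulmx det_lblock !det_ublock.
by rewrite !det1 !mulr1 !mul1r.
Qed.

Section GramDeterminant.
Variable C : numClosedFieldType.

Definition gram1 r n (X : 'M[C]_(r, n)) : 'M[C]_n := 1%:M + conjT X *m X.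

Definition sqrt_mx n (lam : 'I_n -> C) : 'M[C]_n := diag_mx (\row_j sqrtC (lam j)).

Lemma gram1_quad r n (X : 'M[C]_(r, n)) (y : 'cV[C]_n) :
  (conjT y *m gram1 X *m y) 0 0 = sqnorm y + sqnorm (X *m y).
Proof. by rewrite mulmxDr mulmxDl mulmx1 mxE /sqnorm conjT_mul !mulmxA. Qed.

Lemma gram1_minor r n (X : 'M[C]_(r, n.+1)) k :
  row' k (col' k (gram1 X)) = gram1 (col' k X).
Proof.
apply/matrixP => i j; rewrite !mxE (inj_eq lift_inj); congr (_ + _).
by apply: eq_bigr => l _; rewrite !mxE.
Qed.

Lemma col'_mul_sqrt r n (A : 'M[C]_(r, n.+1)) (lam : 'I_n.+1 -> C) k :
  col' k (A *m sqrt_mx lam) = col' k A *m sqrt_mx (fun j => lam (lift k j)).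
Proof. by apply/matrixP => i j; rewrite !mul_mx_diag !mxE. Qed.

Lemma sqrt_mx_mulE n (lam : 'I_n -> C) (y : 'cV[C]_n) k :
  (sqrt_mx lam *m y) k 0 = sqrtC (lam k) * y k 0.
Proof. by rewrite mul_diag_mx !mxE. Qed.

Lemma sqrt_mx_mul_conjT n (Lam : 'M[C]_n) : is_diag_mx Lam -> (forall i, 0 <= Lam i i) ->
  sqrt_mx (fun j => Lam j j) *m conjT (sqrt_mx (fun j => Lam j j)) = Lam.
Proof.
move=> /is_diag_mxP Lam0 Lam_ge0; rewrite conjT_diag mulmx_diag.
apply/matrixP => i j; rewrite !mxE.
have [<-|nij] := eqVneq i j; last by rewrite mulr0n Lam0.
by rewrite mulr1n -normCK ger0_norm ?sqrtC_ge0 // sqrtCK.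
Qed.

Lemma det_gram_diag n r (M : 'M[C]_(r, n)) (Lam : 'M[C]_n) :
  is_diag_mx Lam -> (forall i, 0 <= Lam i i) ->
  \det (1%:M + M *m Lam *m conjT M) = \det (gram1 (M *m sqrt_mx (fun j => Lam j j))).
Proof.
move=> Lam_diag Lam_ge0; rewrite -{1}(sqrt_mx_mul_conjT Lam_diag Lam_ge0).
set S := sqrt_mx _; rewrite mulmxA -(mulmxA _ (conjT S)) -conjT_mul.
exact: det_add1_mulmxC.
Qed.

Lemma det_gram1_diag r n (M : 'M[C]_(r, n)) (lam : 'I_n -> C) :
  is_diag_mx M -> (forall j, 0 <= lam j) ->
  \det (gram1 (M *m sqrt_mx lam)) = \prod_j (1 + lam j * `|rdiag M j| ^+ 2).
Proof.
move=> Mdiag lam_ge0.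
rewrite /gram1 conjT_mul -mulmxA (mulmxA (conjT M)) diag_conjT_mul // conjT_diag.
rewrite !mulmx_diag -diag_const_mx -raddfD /= det_diag.
apply: eq_bigr => j _; rewrite !mxE mulrCA [_^* * _]mulrC -normCK.
by rewrite [`|sqrtC _|]ger0_norm ?sqrtC_ge0 // sqrtCK mulrC.
Qed.

End GramDeterminant.

Lemma real_arg_min (R : numDomainType) n (c : 'I_n.+1 -> R) :
  (forall j, c j \is Num.real) -> exists k, forall j, c k <= c j.
Proof.
elim: n c => [|n IHn] c cR; first by exists ord0 => j; rewrite (ord1 j).
have [k kmin] := IHn (fun j => c (lift ord0 j)) (fun j => cR _).
have [c0k|ck0] := real_leP (cR ord0) (cR (lift ord0 k)).
- exists ord0 => j; case: (unliftP ord0 j) => [j' ->|->] //.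
  exact: le_trans c0k (kmin j').
- exists (lift ord0 k) => j; case: (unliftP ord0 j) => [j' ->|->] //.
  exact: ltW.
Qed.

Section LowerBound.
Variable C : numClosedFieldType.

Lemma det_ge_mul_minor n (H : 'M[C]_n.+1) k (b : C) :
  0 < \det (row' k (col' k H)) ->
  (forall y : 'cV[C]_n.+1, b * `|y k 0| ^+ 2 <= (conjT y *m H *m y) 0 0) ->
  b * \det (row' k (col' k H)) <= \det H.
Proof.
set d := \det _ => d_gt0 Hb.
(* [y] is the [k]-th column of the adjugate: [H y] is [det H] times the [k]-th basis vector. *)
pose y := col k (\adj H).
have yk : y k 0 = d by rewrite !mxE /cofactor -signr_odd oddD addbb mul1r.
have Hy : H *m y = col k (\det H)%:M by rewrite /y !colE mulmxA mul_mx_adj.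
have quad : (conjT y *m H *m y) 0 0 = d * \det H.
  rewrite -mulmxA Hy mxE (bigD1 k) //= big1 => [|i ik]; last first.
    by rewrite !mxE (negbTE ik) mulr0n mulr0.
  by rewrite conjTE yk conj_Creal ?gtr0_real // !mxE eqxx mulr1n addr0.
have := Hb y; rewrite quad yk gtr0_norm // expr2 mulrA mulrC.
by rewrite ler_pM2l.
Qed.

Definition graded_lower_bound r n (A : 'M[C]_(r, n)) (c : 'I_n -> C) :=
  forall k (z : 'cV[C]_n), (forall j, c j < c k -> z j 0 = 0) ->
    c k ^+ 2 * sqnorm z <= sqnorm (A *m z).

Lemma graded_lower_bound_col' r n (A : 'M[C]_(r, n.+1)) (c : 'I_n.+1 -> C) k :
  graded_lower_bound A c -> graded_lower_bound (col' k A) (fun j => c (lift k j)).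
Proof.
move=> Ac k' z' z'0.
pose z : 'cV[C]_n.+1 := \col_i oapp (fun j => z' j 0) 0 (unlift k i).
have zk : z k 0 = 0 by rewrite mxE unlift_none.
have z_lift j : z (lift k j) 0 = z' j 0 by rewrite mxE liftK.
have -> : col' k A *m z' = A *m z.
  apply/matrixP => i j; rewrite !mxE (bigD1_ord k) //= (ord1 j) zk mulr0 add0r.
  by apply: eq_bigr => l _; rewrite z_lift !mxE.
have -> : sqnorm z' = sqnorm z.
  rewrite !sqnormE (bigD1_ord k) //= zk normr0 expr0n add0r.
  by apply: eq_bigr => l _; rewrite z_lift.
apply: Ac => j; case: (unliftP k j) => [j' ->|->] cj; last exact: zk.
by rewrite z_lift; apply: z'0.
Qed.

Lemma det_gram1_ge r n (A : 'M[C]_(r, n)) (lam c : 'I_n -> C) :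
  (forall j, 0 <= lam j) -> (forall j, 0 <= c j) -> graded_lower_bound A c ->
  \prod_j (1 + lam j * c j ^+ 2) <= \det (gram1 (A *m sqrt_mx lam)).
Proof.
elim: n A lam c => [|n IHn] A lam c lam_ge0 c_ge0 Ac; first by rewrite big_ord0 det_mx00.
have [k kmin] := real_arg_min (fun j => ger0_real (c_ge0 j)).
have factor_gt0 j : 0 < 1 + lam j * c j ^+ 2.
  by apply: lt_le_trans ltr01 _; rewrite lerDl mulr_ge0 ?exprn_ge0.
set H := gram1 _.
have minor_ge : \prod_j (1 + lam (lift k j) * c (lift k j) ^+ 2)
                <= \det (row' k (col' k H)).
  by rewrite gram1_minor col'_mul_sqrt; apply: IHn => //; apply: graded_lower_bound_col'.
have minor_gt0 : 0 < \det (row' k (col' k H)).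
  by apply: lt_le_trans minor_ge; apply: prodr_gt0.
rewrite (bigD1_ord k) //=.
apply: le_trans (det_ge_mul_minor (b := 1 + lam k * c k ^+ 2) minor_gt0 _).
  by rewrite ler_wpM2l // ltW.
move=> y; rewrite gram1_quad mulrDl mul1r lerD ?sqnorm_entry_le //.
(* [k] has the least level, so the bound at level [k] holds for every vector. *)
rewrite -mulmxA; apply: (le_trans _ (Ac k _ _)) => [|j]; last first.
  by move/lt_le_trans/(_ (kmin j)); rewrite ltxx.
rewrite mulrAC mulrC ler_wpM2l ?exprn_ge0 //.
apply: le_trans (sqnorm_entry_le _ k).
by rewrite sqrt_mx_mulE normrM exprMn ger0_norm ?sqrtC_ge0 // sqrtCK.
Qed.

End LowerBound.

Section SoftThreshold.
Variables (C : numClosedFieldType) (eps : C).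
Hypothesis eps_ge0 : 0 <= eps.

Definition soft (s : C) : C := if s <= eps then 0 else s - eps.

Lemma soft0 : soft 0 = 0.
Proof. by rewrite /soft eps_ge0. Qed.

Lemma soft_gtE s : eps < s -> soft s = s - eps.
Proof.
move=> eps_lt_s; have sR := gtr0_real (le_lt_trans eps_ge0 eps_lt_s).
by rewrite /soft real_leNgt ?(ger0_real eps_ge0) // eps_lt_s.
Qed.

Lemma soft_ge0 s : 0 <= s -> 0 <= soft s.
Proof.
move=> s_ge0; have [s_le|s_gt] := real_leP (ger0_real s_ge0) (ger0_real eps_ge0).
  by rewrite /soft s_le.
by rewrite soft_gtE // subr_ge0 ltW.
Qed.

Lemma ler_soft2 p s : eps < p -> s \is Num.real -> (soft p <= soft s) = (p <= s).
Proof.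
move=> eps_lt_p sR; rewrite soft_gtE //.
have [s_le|s_gt] := real_leP sR (ger0_real eps_ge0); last by rewrite soft_gtE // lerD2r.
rewrite /soft s_le subr_le0; apply/idP/idP => p_le.
  by have := lt_le_trans eps_lt_p p_le; rewrite ltxx.
by have := le_lt_trans (le_trans p_le s_le) eps_lt_p; rewrite ltxx.
Qed.

Lemma soft_dist_le s : 0 <= s -> `|soft s - s| <= eps.
Proof.
move=> s_ge0; have [s_le|s_gt] := real_leP (ger0_real s_ge0) (ger0_real eps_ge0).
  by rewrite /soft s_le sub0r normrN ger0_norm.
by rewrite soft_gtE // addrAC subrr add0r normrN ger0_norm.
Qed.

Lemma soft_pert_graded r t (Sig D : 'M[C]_(r, t)) :
  is_diag_mx Sig -> (forall j, 0 <= rdiag Sig j) -> spec_norm_le D eps ->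
  graded_lower_bound (Sig + D) (fun j => soft (rdiag Sig j)).
Proof.
move=> Sdiag S_ge0 [_ Deps] k z zsupp; set p := rdiag Sig k.
have [p_le|p_gt] := real_leP (ger0_real (S_ge0 k)) (ger0_real eps_ge0).
  by rewrite /soft p_le expr0n mul0r sqnorm_ge0.
rewrite soft_gtE // mulmxDl.
apply: (sqnorm_addr_ge eps_ge0 p_gt (sqnorm_ge0 z) _ (Deps z)).
rewrite sqnorm_diag_mul // sqnormE mulr_sumr; apply: ler_sum => j _.
have [->|zj] := eqVneq (z j 0) 0; first by rewrite normr0 expr0n !mulr0.
have p_le : p <= rdiag Sig j.
  rewrite -(ler_soft2 p_gt (ger0_real (S_ge0 j))) real_leNgt ?ger0_real ?soft_ge0 //.
  by apply/negP => /zsupp/eqP; rewrite (negbTE zj).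
by rewrite ler_wpM2r ?exprn_ge0 // ger0_norm // !expr2 ler_pM.
Qed.

Lemma soft_pert_diag r t (Sig : 'M[C]_(r, t)) :
  is_diag_mx Sig -> is_diag_mx (map_mx soft Sig - Sig).
Proof.
move=> /is_diag_mxP S0; apply/is_diag_mxP => i j ij.
by rewrite !mxE S0 // soft0 subr0.
Qed.

Lemma soft_pert_norm r t (Sig : 'M[C]_(r, t)) :
  is_diag_mx Sig -> (forall (i : 'I_r) (j : 'I_t), i = j :> nat -> 0 <= Sig i j) ->
  spec_norm_le (map_mx soft Sig - Sig) eps.
Proof.
move=> Sdiag S_ge0; apply: spec_norm_le_diag => // [|j]; first exact: soft_pert_diag.
rewrite rdiagE; case: insubP => [i _ ij|_] /=; last by rewrite normr0.
by rewrite !mxE soft_dist_le ?S_ge0.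
Qed.

End SoftThreshold.

Unset Implicit Arguments.

Theorem lemma1 (C : numClosedFieldType) (r t : nat)
  (hr : (0 < r)%N) (ht : (0 < t)%N) (eps : C) (heps : 0 <= eps)
  (Sig : 'M[C]_(r, t)) (Lam : 'M[C]_t)
  (hSd : is_diag_mx Sig) (hSn : forall (i : 'I_r) (j : 'I_t), i = j :> nat -> 0 <= Sig i j)
  (hLd : is_diag_mx Lam) (hLn : forall i : 'I_t, 0 <= Lam i i) :
  exists2 D : 'M[C]_(r, t),
    is_diag_mx D /\ spec_norm_le D eps &
    forall D' : 'M[C]_(r, t), spec_norm_le D' eps ->
      \det (1%:M + (Sig + D) *m Lam *m conjT (Sig + D))
        <= \det (1%:M + (Sig + D') *m Lam *m conjT (Sig + D')).
Proof.
have Sig_ge0 j : 0 <= rdiag Sig j by apply: sumr_ge0 => i /eqP; apply: hSn.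
exists (map_mx (soft eps) Sig - Sig).
  by split; [apply: soft_pert_diag | apply: soft_pert_norm].
move=> D' D'eps; rewrite !det_gram_diag // addrC subrK.
rewrite det_gram1_diag ?map_mx_diag ?soft0 //.
under eq_bigr do rewrite rdiag_map ?soft0 // ger0_norm ?soft_ge0 //.
apply: (det_gram1_ge hLn _ (soft_pert_graded heps hSd Sig_ge0 D'eps)) => j.
exact: soft_ge0.
Qed.
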